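(* Let $n\geqslant 1$ be an integer and let $I_\nu$ denote the modified Bessel function of the first kind of order $\nu$. Then for every $\kappa>0$, \[ J(\kappa):=2 I_{n-1}(\kappa)I_{n+1}(\kappa) -I_n(\kappa)^2+ \frac{4 n }{\kappa}I_{n-1}(\kappa )I_n(\kappa) - I_{n-1}(\kappa)^2\geqslant 0. \]
   Context: For $\nu\in\mathbb Z$ and $\zeta\in\mathbb C$, $I_\nu(\zeta)=\sum_{k\geqslant 0}\frac{(\zeta/2)^{2k+\nu}}{k!\,\Gamma(k+\nu+1)}$ (with $I_{-\nu}=I_\nu$ for integer $\nu$). *)

From Stdlib Require Import Reals.
From Coquelicot Require Import Coquelicot.
Open Scope R_scope.

(* Modified Bessel function of the first kind of integer order nu >= 0:
   I_nu(x) = sum_{k>=0} (x/2)^(2k+nu) / (k! * Gamma(k+nu+1)),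
   with Gamma(k+nu+1) = (k+nu)! . *)
Definition bessel_I_term (nu : nat) (x : R) (k : nat) : R :=
  (x / 2) ^ (2 * k + nu) / (INR (Factorial.fact k) * INR (Factorial.fact (k + nu))).

Definition bessel_I (nu : nat) (x : R) : R := Series (bessel_I_term nu x).

(** The recurrence [I_(n-1) - I_(n+1) = (2n/κ) I_n] turns [J(κ)] into
    [I_(n-1)(κ)^2 - I_n(κ)^2], so it suffices that [0 <= I_n(κ) <= I_(n-1)(κ)].
    Writing [T_ν(k)] for the [k]-th term of [I_ν], AM-GM gives
    [2 T_(m+1)(k) <= T_m(k) + T_m(k+1)] for [x >= 0]; summing over [k] yields
    [2 I_(m+1) <= 2 I_m - T_m(0) <= 2 I_m]. *)

From Stdlib Require Import Reals Lra Lia.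
From Coquelicot Require Import Coquelicot.
Open Scope R_scope.

Lemma bessel_I_term_nonneg nu x k : 0 <= x -> 0 <= bessel_I_term nu x k.
Proof.
  intros hx. unfold bessel_I_term.
  apply Rdiv_le_0_compat.
  - apply pow_le; lra.
  - apply Rmult_lt_0_compat; apply INR_fact_lt_0.
Qed.

Lemma Rabs_bessel_I_term nu x k :
  Rabs (bessel_I_term nu x k) = bessel_I_term nu (Rabs x) k.
Proof.
  unfold bessel_I_term, Rdiv.
  rewrite Rabs_mult, Rabs_inv, <- RPow_abs, Rabs_mult, Rabs_inv, (Rabs_pos_eq 2) by lra.
  f_equal. f_equal. apply Rabs_pos_eq.
  apply Rmult_le_pos; apply pos_INR.
Qed.

Lemma bessel_I_term_succ_index nu x k :
  bessel_I_term nu x (S k) =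
  bessel_I_term nu x k * ((x / 2) ^ 2 / (INR (S k) * INR (S (k + nu)))).
Proof.
  unfold bessel_I_term.
  replace (2 * S k + nu)%nat with (S (S (2 * k + nu))) by lia.
  replace (S k + nu)%nat with (S (k + nu)) by lia.
  rewrite !fact_simpl, !mult_INR.
  pose proof (INR_fact_lt_0 k). pose proof (INR_fact_lt_0 (k + nu)).
  pose proof (lt_0_INR (S k) (Nat.lt_0_succ k)).
  pose proof (lt_0_INR (S (k + nu)) (Nat.lt_0_succ (k + nu))).
  simpl pow. field. repeat split; lra.
Qed.

Lemma bessel_I_term_succ_order nu x k :
  bessel_I_term (S nu) x k = bessel_I_term nu x k * (x / 2 / INR (S (k + nu))).
Proof.
  unfold bessel_I_term.
  replace (2 * k + S nu)%nat with (S (2 * k + nu)) by lia.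
  replace (k + S nu)%nat with (S (k + nu)) by lia.
  rewrite !fact_simpl, !mult_INR.
  pose proof (INR_fact_lt_0 k). pose proof (INR_fact_lt_0 (k + nu)).
  pose proof (lt_0_INR (S (k + nu)) (Nat.lt_0_succ (k + nu))).
  simpl pow. field. repeat split; lra.
Qed.

Lemma ex_series_bessel_I_term_nonneg nu x :
  0 <= x -> ex_series (bessel_I_term nu x).
Proof.
  intros hx.
  set (y := x / 2).
  assert (hexp : ex_series (fun k => y ^ nu * ((y ^ 2) ^ k / INR (Factorial.fact k)))).
  { apply (@ex_series_scal_l R_AbsRing R_NormedModule).
    exists (exp (y ^ 2)).
    eapply is_series_ext; [|exact (is_exp_Reals (y ^ 2))].
    intros k. cbn. rewrite pow_n_pow. reflexivity. }
  refine (@ex_series_le R_AbsRing R_CompleteNormedModule _ _ _ hexp).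
  intros k. change (norm ?t) with (Rabs t).
  rewrite Rabs_pos_eq by (apply bessel_I_term_nonneg; lra).
  unfold bessel_I_term. fold y.
  pose proof (INR_fact_lt_0 k).
  replace (y ^ nu * ((y ^ 2) ^ k / INR (Factorial.fact k)))
    with (y ^ (2 * k + nu) / INR (Factorial.fact k))
    by (rewrite pow_add, pow_mult; field; lra).
  unfold Rdiv. apply Rmult_le_compat_l; [apply pow_le; unfold y; lra|].
  assert (1 <= INR (Factorial.fact (k + nu))) by apply (le_INR 1), Factorial.lt_O_fact.
  apply Rinv_le_contravar; nra.
Qed.

Lemma ex_series_bessel_I_term nu x : ex_series (bessel_I_term nu x).
Proof.
  apply ex_series_Rabs.
  apply (ex_series_ext (bessel_I_term nu (Rabs x))).
  - intros k. symmetry. apply Rabs_bessel_I_term.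
  - apply ex_series_bessel_I_term_nonneg, Rabs_pos.
Qed.

Lemma bessel_I_nonneg nu x : 0 <= x -> 0 <= bessel_I nu x.
Proof.
  intros hx. unfold bessel_I.
  rewrite <- (Rmult_0_l (Series (bessel_I_term nu x))), <- Series_scal_l.
  apply Series_le; [|apply ex_series_bessel_I_term].
  intros k. pose proof (bessel_I_term_nonneg nu x k hx). lra.
Qed.

Lemma bessel_I_term_succ_order_le nu x k : 0 <= x ->
  2 * bessel_I_term (S nu) x k <= bessel_I_term nu x k + bessel_I_term nu x (S k).
Proof.
  intros hx.
  rewrite bessel_I_term_succ_order, bessel_I_term_succ_index.
  pose proof (bessel_I_term_nonneg nu x k hx) as hT.
  set (T := bessel_I_term nu x k) in *.
  assert (hp : 0 < INR (S k)) by (apply lt_0_INR; lia).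
  assert (hpq : INR (S k) <= INR (S (k + nu))) by (apply le_INR; lia).
  set (p := INR (S k)) in *. set (q := INR (S (k + nu))) in *.
  set (a := x / 2).
  (* AM-GM: [a^2 + p q >= 2 a p] since [q >= p] *)
  assert (E : T + T * (a ^ 2 / (p * q)) - 2 * (T * (a / q)) =
              T * ((a - p) ^ 2 + p * (q - p)) / (p * q)) by (field; lra).
  assert (0 <= T * ((a - p) ^ 2 + p * (q - p)) / (p * q)).
  { apply Rdiv_le_0_compat; [|nra].
    apply Rmult_le_pos; [lra|]. pose proof (pow2_ge_0 (a - p)). nra. }
  lra.
Qed.

Lemma bessel_I_succ_le nu x : 0 <= x -> bessel_I (S nu) x <= bessel_I nu x.
Proof.
  intros hx. unfold bessel_I.
  pose proof (ex_series_bessel_I_term nu x) as hex.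
  pose proof (proj1 (ex_series_incr_1 _) hex) as hex_shift.
  assert (hsum : Series (fun k => 2 * bessel_I_term (S nu) x k) <=
              Series (fun k => bessel_I_term nu x k + bessel_I_term nu x (S k))).
  { apply Series_le.
    - intros k. split.
      + pose proof (bessel_I_term_nonneg (S nu) x k hx). lra.
      + apply bessel_I_term_succ_order_le, hx.
    - exact (@ex_series_plus R_AbsRing R_NormedModule _ _ hex hex_shift). }
  rewrite Series_scal_l, Series_plus, (Series_incr_1 _ hex) in hsum by assumption.
  rewrite (Series_incr_1 _ hex).
  pose proof (bessel_I_term_nonneg nu x 0 hx). lra.
Qed.

Lemma bessel_I_term_recurrence nu x k : x <> 0 ->
  bessel_I_term nu x (S k) - bessel_I_term (S (S nu)) x k =
  2 * INR (S nu) / x * bessel_I_term (S nu) x (S k).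
Proof.
  intros hx.
  rewrite (bessel_I_term_succ_order (S nu)), (bessel_I_term_succ_order nu),
    (bessel_I_term_succ_index (S nu)), (bessel_I_term_succ_order nu),
    bessel_I_term_succ_index.
  rewrite !S_INR, !plus_INR, !S_INR.
  pose proof (pos_INR nu). pose proof (pos_INR k).
  field. repeat split; lra.
Qed.

Lemma bessel_I_recurrence nu x : x <> 0 ->
  bessel_I nu x - bessel_I (S (S nu)) x = 2 * INR (S nu) / x * bessel_I (S nu) x.
Proof.
  intros hx. unfold bessel_I.
  pose proof (ex_series_bessel_I_term nu x) as hex.
  rewrite (Series_incr_1 _ hex), (Series_incr_1 _ (ex_series_bessel_I_term (S nu) x)).
  rewrite Rmult_plus_distr_l, <- Series_scal_l, <- Rplus_minus_assoc, <- Series_minus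
    by (apply ex_series_bessel_I_term || exact (proj1 (ex_series_incr_1 _) hex)).
  f_equal.
  - rewrite (bessel_I_term_succ_order nu x 0), Nat.add_0_l, S_INR.
    pose proof (pos_INR nu). field. split; lra.
  - apply Series_ext. intros k. apply bessel_I_term_recurrence, hx.
Qed.

Theorem lemmaA1 (n : nat) (hn : (1 <= n)%nat) (kappa : R) (hk : 0 < kappa) :
  0 <= 2 * bessel_I (n - 1) kappa * bessel_I (n + 1) kappa
       - (bessel_I n kappa) ^ 2
       + 4 * INR n / kappa * bessel_I (n - 1) kappa * bessel_I n kappa
       - (bessel_I (n - 1) kappa) ^ 2.
Proof.
  destruct n as [|m]; [lia|].
  replace (S m - 1)%nat with m by lia.
  replace (S m + 1)%nat with (S (S m)) by lia.
  pose proof (bessel_I_recurrence m kappa (Rgt_not_eq _ _ hk)) as hrec.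
  pose proof (bessel_I_succ_le m kappa (Rlt_le _ _ hk)) as hle.
  pose proof (bessel_I_nonneg (S m) kappa (Rlt_le _ _ hk)) as hpos.
  set (A := bessel_I m kappa) in *.
  set (B := bessel_I (S m) kappa) in *.
  set (C := bessel_I (S (S m)) kappa) in *.
  replace (4 * INR (S m) / kappa * A * B) with (2 * A * (2 * INR (S m) / kappa * B))
    by (field; lra).
  rewrite <- hrec.
  replace (2 * A * C - B ^ 2 + 2 * A * (A - C) - A ^ 2) with ((A - B) * (A + B)) by ring.
  apply Rmult_le_pos; lra.
Qed.
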